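(* In the setting below, fix $e\in G_0$, and let $F_e=\{f\in G_0: T_e\cap S_f\neq\emptyset\}$. For $f\in F_e$ put $$\omega_{e,f}=1_e\delta_e\#\sum_{l\in T_e\cap S_f}v_l.$$ Then: (i) the orbits of the conjugation action of $U_e$ on $W_e$ are exactly the sets $\{w_{e,l}: l\in T_e\cap S_f\}$, $f\in F_e$; these are pairwise distinct for distinct $f$, and $\omega_{e,f}$ is the sum of the elements of the corresponding orbit; (ii) $w_e=\sum_{f\in F_e}\omega_{e,f}$; (iii) the elements $\omega_{e,f}$, $f\in F_e$, are central orthogonal idempotents of $B_e$; (iv) for each $f\in F_e$, $B_{e,f}:=B_e\omega_{e,f}=\bigoplus_{g\in G_e,\ l\in T_e\cap S_f}E_g\delta_g\#v_l$ is an ideal of $B_e$ which is a unital algebra with identity $\omega_{e,f}$; (v) $B_e=\bigoplus_{f\in F_e}B_{e,f}$.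
   Context: Groupoid conventions. A groupoid is a small category with all morphisms invertible, regarded as the set $G$ of morphisms. For $g\in G$ we have $d(g)=g^{-1}g$ and $r(g)=gg^{-1}$. The product $gh$ is defined iff $d(g)=r(h)$, and then $d(gh)=d(h)$, $r(gh)=r(g)$. $G^2=\{(g,h):d(g)=r(h)\}$, and $G_0$ is the set of identities. For $e\in G_0$: - $G_e=\{g: d(g)=r(g)=e\}$; - $S_e=\{g\in G: d(g)=e\}$; - $T_e=\{g\in G: r(g)=e\}$. Actions. An action of $G$ on a ring $R$ is a pair $\beta=(\{E_g\},\{\beta_g\})$ where each $E_g=E_{r(g)}$ is an ideal of $R$, each $\beta_g:E_{g^{-1}}\to E_g$ is a ring isomorphism, $\beta_e=\mathrm{id}$ for $e\in G_0$, and $\beta_g\beta_h=\beta_{gh}$ on $E_{h^{-1}}$ for $(g,h)\in G^2$. Skew groupoid ring. $R\star_\beta G=\bigoplus_{g\in G}E_g\delta_g$ (the $\delta_g$ are formal symbols), with $(x\delta_g)(y\delta_h)=x\beta_g(y)\delta_{gh}$ if $(g,h)\in G^2$ and $0$ otherwise, for $x\in E_g$, $y\in E_h$. $KG^*$. The free $K$-module with basis $\{v_g\}_{g\in G}$, with $v_gv_h=\delta_{g,h}v_g$ and identity $\sum_g v_g$. Weak smash product. For a unital $G$-graded algebra $A=\bigoplus A_g$ (with $A_gA_h\subseteq A_{gh}$ if $(g,h)\in G^2$, and $0$ otherwise), $KG^*$ acts by $v_h\cdot a=a_h$ (the $h$-component). $A\#KG^*=A\otimes_K KG^*$ with $(a\#v_g)(b\#v_h)=a(v_{gh^{-1}}\cdot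 b)\#v_h$ if $d(g)=d(h)$, and $0$ otherwise. Setting. $K$ is a commutative unital ring and $G$ is a finite groupoid. $R$ is a not necessarily unital $K$-algebra with an action $\beta$ of $G$ (by $K$-linear maps) such that each $E_e$, $e\in G_0$, has an identity element $1_e$; put $1_g:=1_{r(g)}$, the identity of $E_g$. Then $R\star_\beta G$ is a unital $K$-algebra with identity $\sum_{e\in G_0}1_e\delta_e$. It is $G$-graded with $g$-component $E_g\delta_g$, so that $v_k\cdot(a_g\delta_g)=\delta_{k,g}a_g\delta_g$. Let $B=(R\star_\beta G)\#KG^*=\bigoplus_{g,h\in G}E_g\delta_g\#v_h$ and $$B_0=\bigoplus_{g,h\in G:\ d(g)=r(g)=r(h)}E_g\delta_g\#v_h.$$ Further notation: - $B_e=\bigoplus_{g\in G_e,\,h\in T_e}E_g\delta_g\#v_h$, a unital subalgebra of $B_0$ with identity $w_e=1_e\delta_e\#\sum_{h\in T_e}v_h$; - $W_e=\{w_{e,h}:=1_e\delta_e\#v_h: h\in T_e\}$; - $U_e=\{1_g\delta_g\#\sum_{h\in T_e}v_h: g\in G_e\}$, a subgroup of the units of $B_e$, acting on $W_e$ by conjugation. *)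

From HB Require Import structures.
From mathcomp Require Import all_boot all_order all_algebra.
Set Implicit Arguments. Unset Strict Implicit. Unset Printing Implicit Defensive.
Import GRing.Theory.
Local Open Scope ring_scope.

(* A finite groupoid, regarded as its (finite) set of morphisms, with
   domain d, range r, inverse and a (total) composition function whose
   value is only meaningful when d g = r h. *)
Record groupoid := Groupoid {
  gT :> finType;
  gd : gT -> gT;
  gr : gT -> gT;
  ginv : gT -> gT;
  gmul : gT -> gT -> gT;
  gd_mul : forall g h, gd g = gr h -> gd (gmul g h) = gd h;
  gr_mul : forall g h, gd g = gr h -> gr (gmul g h) = gr g;
  gmulA : forall g h k, gd g = gr h -> gd h = gr k ->
            gmul (gmul g h) k = gmul g (gmul h k);
  gd_d : forall g, gd (gd g) = gd g;
  gr_d : forall g, gr (gd g) = gd g;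
  gd_r : forall g, gd (gr g) = gr g;
  gr_r : forall g, gr (gr g) = gr g;
  gmul_r : forall g, gmul (gr g) g = g;
  gmul_d : forall g, gmul g (gd g) = g;
  gd_inv : forall g, gd (ginv g) = gr g;
  gr_inv : forall g, gr (ginv g) = gd g;
  gmulV : forall g, gmul g (ginv g) = gr g;
  gmulVg : forall g, gmul (ginv g) g = gd g }.

Record nuAlg (K : comPzRingType) := NuAlg {
  nT :> lmodType K;
  nmul : nT -> nT -> nT;
  nmulA : associative nmul;
  nmulDl : left_distributive nmul +%R;
  nmulDr : right_distributive nmul +%R;
  nmulZl : forall (a : K) x y, nmul (a *: x) y = a *: nmul x y;
  nmulZr : forall (a : K) x y, nmul x (a *: y) = a *: nmul x y }.

(* E_g := Eid (gr g), so that E_g = E_{r(g)};  1_g := idE (gr g);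
   E_{g^-1} = Eid (gr (ginv g)) = Eid (gd g). *)
Record gaction (K : comPzRingType) (G : groupoid) (R : nuAlg K) := GAction {
  Eid : G -> {pred R};
  beta : G -> R -> R;
  idE : G -> R;
  E_0 : forall g, 0 \in Eid (gr g);
  E_sub : forall g x y, x \in Eid (gr g) -> y \in Eid (gr g) -> x - y \in Eid (gr g);
  E_mull : forall g x y, y \in Eid (gr g) -> nmul x y \in Eid (gr g);
  E_mulr : forall g x y, x \in Eid (gr g) -> nmul x y \in Eid (gr g);
  one_in : forall g, idE (gr g) \in Eid (gr g);
  one_l : forall g x, x \in Eid (gr g) -> nmul (idE (gr g)) x = x;
  one_r : forall g x, x \in Eid (gr g) -> nmul x (idE (gr g)) = x;
  beta_in : forall g x, x \in Eid (gd g) -> beta g x \in Eid (gr g);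
  betaD : forall g x y, x \in Eid (gd g) -> y \in Eid (gd g) ->
            beta g (x + y) = beta g x + beta g y;
  betaM : forall g x y, x \in Eid (gd g) -> y \in Eid (gd g) ->
            beta g (nmul x y) = nmul (beta g x) (beta g y);
  betaZ : forall g (a : K) x, x \in Eid (gd g) -> beta g (a *: x) = a *: beta g x;
  beta_inj : forall g x y, x \in Eid (gd g) -> y \in Eid (gd g) ->
            beta g x = beta g y -> x = y;
  beta_surj : forall g y, y \in Eid (gr g) -> exists2 x, x \in Eid (gd g) & beta g x = y;
  beta_id : forall e x, gd e = e -> x \in Eid e -> beta e x = x;
  beta_comp : forall g h x, gd g = gr h -> x \in Eid (gd h) ->
            beta g (beta h x) = beta (gmul g h) x }.

Section B.
Variables (K : comPzRingType) (G : groupoid) (R : nuAlg K) (A : gaction G R).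

(* Elements of B = (R *_beta G) # KG^* : the coefficient at (g, h) is the
   component of  E_g delta_g # v_h. *)
Definition BT := {ffun G * G -> R}.

(* x delta_k # v_g *)
Definition belem (x : R) (k g : G) : BT :=
  [ffun p => if p == (k, g) then x else 0].

Definition inB (x : BT) : Prop := forall p : G * G, x p \in Eid A (gr p.1).

(* Multiplication of B, the bilinear extension of
   (x d_k # v_g)(y d_m # v_h) = x d_k (v_{g h^-1} . y d_m) # v_h   if d g = d h,
   with v_{g h^-1} . (y d_m) = [m = g h^-1] y d_m and
   (x d_k)(y d_m) = x beta_k(y) d_{km}  if d k = r m. *)
Definition Bmul (x y : BT) : BT :=
  \sum_(kg : G * G) \sum_(mh : G * G)
    (if [&& gd kg.2 == gd mh.2, mh.1 == gmul kg.2 (ginv mh.2)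
          & gd kg.1 == gr mh.1]
     then belem (nmul (x kg) (beta A kg.1 (y mh))) (gmul kg.1 mh.1) mh.2
     else 0).

Definition inBe (e : G) (x : BT) : Prop :=
  inB x /\ forall g h : G,
    ~~ [&& gd g == e, gr g == e & gr h == e] -> x (g, h) = 0.

Definition wel (e h : G) : BT := belem (idE A e) e h.
Definition we (e : G) : BT := \sum_(h : G | gr h == e) wel e h.

Definition inW (e : G) (x : BT) : Prop := exists h : G, gr h = e /\ x = wel e h.

Definition inU (e : G) (u : BT) : Prop :=
  exists g : G, [/\ gd g = e, gr g = e &
    u = \sum_(h : G | gr h == e) belem (idE A (gr g)) g h].

(* The orbit of w under conjugation by U_e: the elements u w u^-1, where
   u ranges over U_e and u^-1 is the inverse of u in B_e. *)
Definition Uorbit (e : G) (w x : BT) : Prop :=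
  exists u u' : BT, [/\ inU e u, inBe e u', Bmul u u' = we e, Bmul u' u = we e
                      & x = Bmul (Bmul u w) u'].

Definition Fe (e : G) : {pred G} :=
  [pred f | (gd f == f) && [exists l : G, (gr l == e) && (gd l == f)]].

Definition Oset (e f : G) (x : BT) : Prop :=
  exists l : G, [/\ gr l = e, gd l = f & x = wel e l].

Definition omega (e f : G) : BT :=
  \sum_(l : G | (gr l == e) && (gd l == f)) belem (idE A e) e l.

Definition Bef (e f : G) (x : BT) : Prop :=
  exists2 y : BT, inBe e y & x = Bmul y (omega e f).

End B.

(* Everything rests on one explicit formula for
   the coefficients of a product (Bmul_coef).  From it we get:
   - for x in B_e, both x omega_{e,f} and omega_{e,f} x equal the projection
     [cut f x], which keeps exactly the coefficients at (g, h) with d(h) = f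
     (mul_omega, omega_mul).  The projections cut f, f in F_e, are orthogonal
     and add up to the identity of B_e (cut_supported, sum_cut); this gives
     (ii), (iii), the description of B_{e,f} by supports (iv) and the direct
     sum (v);
   - for g in G_e the unit u_g = 1_g delta_g # sum_{h in T_e} v_h has u_{g^-1}
     as its only right inverse in B_e, and u_g w_{e,h} u_{g^-1} = w_{e,gh};
     since G_e acts transitively on each T_e cap S_f, the U_e-orbit of w_{e,h}
     is {w_{e,l} : l in T_e cap S_{d(h)}}, which is (i). *)
From HB Require Import structures.
From mathcomp Require Import all_boot all_order all_algebra.
Set Implicit Arguments. Unset Strict Implicit. Unset Printing Implicit Defensive.
Import GRing.Theory.
Local Open Scope ring_scope.

Section GroupoidFacts.
Variable G : groupoid.
Implicit Types a b g h : G.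

Lemma gmulK a b : gd a = gr b -> gmul (gmul a b) (ginv b) = a.
Proof. by move=> dab; rewrite gmulA ?gr_inv // gmulV -dab gmul_d. Qed.

Lemma gmulVK a b : gd a = gd b -> gmul (gmul a (ginv b)) b = a.
Proof. by move=> dab; rewrite gmulA ?gr_inv ?gd_inv // gmulVg -dab gmul_d. Qed.

Lemma gmulKV g a : gd g = gr a -> gmul (ginv g) (gmul g a) = a.
Proof. by move=> dga; rewrite -gmulA ?gd_inv // gmulVg dga gmul_r. Qed.

Lemma gmulKVl g a : gr a = gr g -> gmul g (gmul (ginv g) a) = a.
Proof. by move=> rag; rewrite -gmulA ?gr_inv ?gd_inv // gmulV -rag gmul_r. Qed.

Lemma gr_mulV a b : gd a = gd b -> gr (gmul a (ginv b)) = gr a.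
Proof. by move=> dab; rewrite gr_mul // gr_inv. Qed.

Lemma gd_mulV a b : gd a = gd b -> gd (gmul a (ginv b)) = gr b.
Proof. by move=> dab; rewrite gd_mul ?gr_inv // gd_inv. Qed.

Lemma gmul_injr a b h : gd a = gr h -> gd b = gr h -> gmul a h = gmul b h -> a = b.
Proof. by move=> dah dbh eq_ab; rewrite -(gmulK dah) eq_ab gmulK. Qed.

Lemma gmul_injl g a b : gd g = gr a -> gd g = gr b -> gmul g a = gmul g b -> a = b.
Proof. by move=> dga dgb eq_ab; rewrite -(gmulKV dga) eq_ab gmulKV. Qed.

Lemma ginvK g : ginv (ginv g) = g.
Proof.
apply: (@gmul_injl (ginv g)); rewrite ?gr_inv ?gd_inv //.
by rewrite gmulV gmulVg gr_inv.
Qed.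

End GroupoidFacts.

Section NonUnitalFacts.
Variables (K : comPzRingType) (R : nuAlg K).

Lemma nmul0l (y : R) : nmul 0 y = 0.
Proof.
have := nmulDl (0 : R) 0 y; rewrite addr0 => twice.
by apply: (addrI (nmul 0 y)); rewrite addr0 -twice.
Qed.

Lemma nmul0r (y : R) : nmul y 0 = 0.
Proof.
have := nmulDr y (0 : R) 0; rewrite addr0 => twice.
by apply: (addrI (nmul y 0)); rewrite addr0 -twice.
Qed.

Lemma nmul_neq0 (a b : R) : nmul a b != 0 -> (a != 0) && (b != 0).
Proof.
by case: (eqVneq a 0) => [->|]; rewrite ?nmul0l ?eqxx //;
  case: (eqVneq b 0) => [->|]; rewrite ?nmul0r ?eqxx.
Qed.

End NonUnitalFacts.

Lemma sum_single (V : nmodType) (I : finType) (F : I -> V) j :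
  (forall i, F i != 0 -> i = j) -> \sum_i F i = F j.
Proof.
move=> supp; apply: big_only1 => // i ne_ij _.
by apply/eqP; apply: contraNT ne_ij => /supp ->.
Qed.

Lemma sum_neq0 (V : nmodType) (I : finType) (F : I -> V) :
  \sum_i F i != 0 -> exists i, F i != 0.
Proof.
move=> nz; apply/existsP; apply: contraNT nz => /existsPn none.
by apply/eqP/big1 => i _; apply/eqP/negbNE/none.
Qed.

Lemma if_neq0 (V : nmodType) (c : bool) (v : V) :
  (if c then v else 0) != 0 -> c && (v != 0).
Proof. by case: c; rewrite ?eqxx. Qed.

Section ActionFacts.
Variables (K : comPzRingType) (G : groupoid) (R : nuAlg K) (A : gaction G R).
Implicit Types g : G.

Lemma E_0d g : (0 : R) \in Eid A (gd g).
Proof. by have := E_0 A (gd g); rewrite gr_d. Qed.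

Lemma E_add g (a b : R) :
  a \in Eid A (gr g) -> b \in Eid A (gr g) -> a + b \in Eid A (gr g).
Proof. by move=> Ea Eb; have := E_sub Ea (E_sub (E_0 A g) Eb); rewrite sub0r opprK. Qed.

Lemma E_scale g (c : K) (a : R) : a \in Eid A (gr g) -> c *: a \in Eid A (gr g).
Proof. by move=> Ea; rewrite -(one_l Ea) -nmulZl; apply: E_mull. Qed.

Lemma one_ind g : idE A (gd g) \in Eid A (gd g).
Proof. by have := one_in A (gd g); rewrite gr_d. Qed.

Lemma one_ld g (a : R) : a \in Eid A (gd g) -> nmul (idE A (gd g)) a = a.
Proof. by have := @one_l _ _ _ A (gd g) a; rewrite gr_d. Qed.

Lemma beta0 g : beta A g 0 = 0.
Proof.
have := betaD (E_0d g) (E_0d g); rewrite addr0 => twice.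
by apply: (addrI (beta A g 0)); rewrite addr0 -twice.
Qed.

Lemma beta_neq0 g (a : R) : beta A g a != 0 -> a != 0.
Proof. by apply: contraNneq => ->; rewrite beta0. Qed.

Lemma beta_one g : beta A g (idE A (gd g)) = idE A (gr g).
Proof.
have [x Ex betax] := beta_surj (one_in A g).
have E1 : beta A g (idE A (gd g)) \in Eid A (gr g) by apply/beta_in/one_ind.
by rewrite -(one_r E1) -betax -betaM ?one_ind // one_ld.
Qed.

End ActionFacts.

Section Coefficients.
Variables (K : comPzRingType) (G : groupoid) (R : nuAlg K) (A : gaction G R).
Implicit Types (g h k : G) (x y : BT G R).

Lemma belemE (c : R) k g p : belem c k g p = if p == (k, g) then c else 0.
Proof. by rewrite ffunE. Qed.

Lemma sum_belemE (P : pred G) (c : R) k p :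
  (\sum_(l | P l) belem c k l) p = if (p.1 == k) && P p.2 then c else 0.
Proof.
case: p => p1 p2 /=; rewrite sum_ffunE big_mkcond /=.
rewrite (@sum_single _ _ _ p2) => [|i].
  by rewrite belemE xpair_eqE eqxx andbT; case: (P p2); case: (p1 == k).
case: (P i); rewrite ?eqxx // belemE xpair_eqE.
by case: (p1 == k); case: (eqVneq p2 i); rewrite ?eqxx.
Qed.

Lemma if_coef (c : bool) x p : (if c then x else 0) p = if c then x p else 0.
Proof. by case: c; rewrite ?ffunE. Qed.

(* The (p1, p2)-coefficient of x y: the (k, g)-term of x only meets the
   (g p2^-1, p2)-term of y, and contributes to delta_{k g p2^-1} # v_{p2}. *)
Lemma Bmul_coef x y p :
  Bmul A x y p = \sum_(kg : G * G)
    (if [&& gd kg.2 == gd p.2, gd kg.1 == gr (gmul kg.2 (ginv p.2))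
          & p.1 == gmul kg.1 (gmul kg.2 (ginv p.2))]
     then nmul (x kg) (beta A kg.1 (y (gmul kg.2 (ginv p.2), p.2))) else 0).
Proof.
rewrite /Bmul sum_ffunE; apply: eq_bigr => [[k g]] _ /=.
rewrite sum_ffunE (@sum_single _ _ _ (gmul g (ginv p.2), p.2)).
  rewrite if_coef belemE eqxx /=.
  case: p => p1 p2 /=; rewrite xpair_eqE eqxx andbT.
  by case: (gd g == gd p2); case: (gd k == _); case: (p1 == _).
case=> m h /=; rewrite if_coef belemE => /if_neq0 /andP [/and3P [_ /eqP -> _]].
by move=> /if_neq0 /andP [/eqP pE _]; case: p pE => p1 p2 [_ ->].
Qed.

Lemma Bmul_neq0 x y p : Bmul A x y p != 0 ->
  exists k g, [/\ x (k, g) != 0, y (gmul g (ginv p.2), p.2) != 0, gd g = gd p.2,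
                  gd k = gr (gmul g (ginv p.2)) & p.1 = gmul k (gmul g (ginv p.2))].
Proof.
rewrite Bmul_coef => /sum_neq0 [[k g]] /= /if_neq0 /andP [/and3P [/eqP dg /eqP dk /eqP pE]].
by move=> /nmul_neq0 /andP [xnz /beta_neq0 ynz]; exists k, g.
Qed.

Lemma Bmul_belem (c : R) k g y p : Bmul A (belem c k g) y p =
  if [&& gd g == gd p.2, gd k == gr (gmul g (ginv p.2))
       & p.1 == gmul k (gmul g (ginv p.2))]
  then nmul c (beta A k (y (gmul g (ginv p.2), p.2))) else 0.
Proof.
rewrite Bmul_coef (@sum_single _ _ _ (k, g)) /= ?belemE ?eqxx //.
case=> k' g' /=; rewrite belemE; case: (eqVneq (k', g') (k, g)) => [//|_].
by rewrite nmul0l if_same eqxx.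
Qed.

Lemma inB_mul x y : inB A x -> inB A (Bmul A x y).
Proof.
move=> Bx p; rewrite Bmul_coef; apply: (big_ind (fun v : R => v \in Eid A (gr p.1))).
- exact: E_0.
- by move=> a b; apply: E_add.
case=> k g _ /=; case: ifP => [/and3P [_ /eqP dk /eqP ->]|_]; last exact: E_0.
by rewrite gr_mul //; apply/E_mulr/(Bx (k, g)).
Qed.

End Coefficients.

Section FixedIdentity.
Variables (K : comPzRingType) (G : groupoid) (R : nuAlg K) (A : gaction G R).
Variables (e : G) (he : gd e = e).
Implicit Types (g h k l f : G) (x y : BT G R).

Lemma gre : gr e = e.
Proof. by rewrite -{1}he gr_d. Qed.

Lemma one_e : idE A e \in Eid A e.
Proof. by have := one_in A e; rewrite gre. Qed.

Lemma one_le (a : R) : a \in Eid A e -> nmul (idE A e) a = a.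
Proof. by have := @one_l _ _ _ A e a; rewrite gre. Qed.

Lemma Be_neq0 x k g : inBe A e x -> x (k, g) != 0 -> [/\ gd k = e, gr k = e & gr g = e].
Proof.
move=> [_ Bx0] nz; case/boolP: [&& gd k == e, gr k == e & gr g == e].
  by case/and3P => /eqP ? /eqP ? /eqP.
by move/Bx0/eqP; rewrite (negbTE nz).
Qed.

Lemma Fe_dl l : gr l = e -> gd l \in Fe e.
Proof. by move=> rl; rewrite inE /= gd_d eqxx /=; apply/existsP; exists l; rewrite rl !eqxx. Qed.

Lemma Fe_ex f : f \in Fe e -> exists l, gr l = e /\ gd l = f.
Proof. by rewrite inE => /andP [_ /existsP [l /andP [/eqP ? /eqP ?]]]; exists l. Qed.

Lemma omega_coef f p : omega A e f p =
  if (p.1 == e) && ((gr p.2 == e) && (gd p.2 == f)) then idE A e else 0.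
Proof. exact: sum_belemE. Qed.

(* The elements of B_{e,f}: those of B supported on pairs (g, h) with g in G_e
   and h in T_e cap S_f. *)
Definition supported f x := forall g h : G,
  ~~ [&& gd g == e, gr g == e, gr h == e & gd h == f] -> x (g, h) = 0.

Lemma supported_neq0 f x g h : supported f x -> x (g, h) != 0 ->
  [/\ gd g = e, gr g = e, gr h = e & gd h = f].
Proof.
move=> sx nz; case/boolP: [&& gd g == e, gr g == e, gr h == e & gd h == f].
  by case/and4P => /eqP ? /eqP ? /eqP ? /eqP.
by move/sx/eqP; rewrite (negbTE nz).
Qed.

Lemma supported_inBe f x : inB A x -> supported f x -> inBe A e x.
Proof.
move=> Bx sx; split => // g h outside; apply: sx; apply: contra outside.
by case/and4P => -> -> -> _.
Qed.

Lemma omega_supported f : supported f (omega A e f).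
Proof.
move=> g h outside; rewrite omega_coef /=.
case: ifP => // /and3P [/eqP ge /eqP rh /eqP dh].
by move: outside; rewrite ge he gre rh dh !eqxx.
Qed.

Lemma omega_inBe f : inBe A e (omega A e f).
Proof.
apply: supported_inBe (omega_supported (f := f)) => p; rewrite omega_coef.
case: ifP => [/andP [/eqP -> _]|_]; [rewrite gre; exact: one_e | exact: E_0].
Qed.

(* The projection of B_e onto B_{e,f}: keep the coefficients at (g, h) with
   d(h) = f. *)
Definition cut f x : BT G R := [ffun p => if gd p.2 == f then x p else 0].

Lemma cut_supported f f' x : supported f' x -> cut f x = if f' == f then x else 0.
Proof.
move=> sx; apply/ffunP => [[g h]]; rewrite ffunE if_coef /=.
case: (eqVneq (gd h) f) => [dh|ne].
  case: (eqVneq f' f) => // ne'; apply/eqP/negPn/negP => /(supported_neq0 sx) [_ _ _ dh'].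
  by move: ne'; rewrite -dh' dh eqxx.
by case: ifP => // /eqP f'f; rewrite sx // f'f (negbTE ne) !andbF.
Qed.

Lemma cut_sum (I : finType) (P : pred I) (F : I -> BT G R) f :
  cut f (\sum_(i | P i) F i) = \sum_(i | P i) cut f (F i).
Proof.
apply/ffunP => p; rewrite ffunE !sum_ffunE; under [RHS]eq_bigr do rewrite ffunE.
by case: (gd p.2 == f); rewrite // big1.
Qed.

Lemma sum_cut x : inBe A e x -> \sum_(f | f \in Fe e) cut f x = x.
Proof.
move=> Bx; apply/ffunP => [[p1 p2]]; rewrite sum_ffunE.
under eq_bigr do rewrite ffunE /=.
case: (eqVneq (x (p1, p2)) 0) => [->|nzx]; first by rewrite big1 // => f _; rewrite if_same.
have [_ _ rp2] := Be_neq0 Bx nzx.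
rewrite big_mkcond (@sum_single _ _ _ (gd p2)) /= ?Fe_dl ?eqxx //.
by move=> f /if_neq0 /andP [_ /if_neq0 /andP [/eqP -> _]].
Qed.

Lemma omega_cut f : omega A e f = cut f (we A e).
Proof.
apply/ffunP => [[p1 p2]]; rewrite omega_coef ffunE /we /wel sum_belemE /=.
by case: (p1 == e); case: (gr p2 == e); case: (gd p2 == f).
Qed.

Lemma mul_omega x f : inBe A e x -> Bmul A x (omega A e f) = cut f x.
Proof.
move=> Bx; apply/ffunP => [[p1 p2]]; rewrite ffunE Bmul_coef /=.
rewrite (@sum_single _ _ _ (p1, p2)) /=; last first.
  case=> k g /= /if_neq0 /andP [/and3P [/eqP dg /eqP dk /eqP pE]].
  move=> /nmul_neq0 /andP [nzx /beta_neq0]; rewrite omega_coef /=.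
  move=> /if_neq0 /andP [/andP [/eqP mE /andP [/eqP rp2 _]] _].
  have [dk' _ _] := Be_neq0 Bx nzx.
  have gE : g = p2 by rewrite -(gmulVK dg) mE -rp2 gmul_r.
  by rewrite pE mE -dk' gmul_d gE.
case: (eqVneq (x (p1, p2)) 0) => [->|nzx]; first by rewrite nmul0l !if_same.
have [dp1 _ rp2] := Be_neq0 Bx nzx.
have p1e : gmul p1 e = p1 by rewrite -dp1 gmul_d.
rewrite eqxx gmulV gr_r rp2 dp1 p1e !eqxx /= omega_coef /= rp2 !eqxx /=.
case: (gd p2 == f); last by rewrite beta0 nmul0r.
by rewrite -dp1 beta_one one_r //; apply: (proj1 Bx (p1, p2)).
Qed.

Lemma omega_mul x f : inBe A e x -> Bmul A (omega A e f) x = cut f x.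
Proof.
move=> Bx; apply/ffunP => [[p1 p2]]; rewrite ffunE Bmul_coef /=.
have only_e k g : (if [&& gd g == gd p2, gd k == gr (gmul g (ginv p2))
          & p1 == gmul k (gmul g (ginv p2))]
     then nmul (omega A e f (k, g)) (beta A k (x (gmul g (ginv p2), p2))) else 0) != 0 ->
     p1 = gmul g (ginv p2) /\ (k, g) = (e, gmul p1 p2).
  move=> /if_neq0 /andP [/and3P [/eqP dg /eqP dk /eqP pE]].
  move=> /nmul_neq0 /andP [+ _]; rewrite omega_coef /=.
  move=> /if_neq0 /andP [/andP [/eqP kE /andP [/eqP rg _]] _].
  have rm : gr (gmul g (ginv p2)) = e by rewrite gr_mulV.
  have pE' : p1 = gmul g (ginv p2) by rewrite pE kE -{1}rm gmul_r.
  by rewrite kE pE' gmulVK.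
case: (eqVneq (x (p1, p2)) 0) => [x0|nzx].
  rewrite x0 if_same big1 // => [[k g]] _; apply/eqP/negPn/negP => nz.
  have [pE _] := only_e k g nz.
  by move: nz => /if_neq0 /andP [_ /nmul_neq0 /andP [_ /beta_neq0]]; rewrite -pE x0 eqxx.
have [dp1 rp1 rp2] := Be_neq0 Bx nzx.
have dp12 : gd p1 = gr p2 by rewrite dp1 rp2.
rewrite (@sum_single _ _ _ (e, gmul p1 p2)) /=; last by case=> k g /only_e [].
have ep1 : gmul e p1 = p1 by rewrite -{1}rp1 gmul_r.
rewrite gd_mul // gmulK // eqxx rp1 he ep1 !eqxx /= omega_coef /= eqxx.
rewrite gr_mul // rp1 eqxx gd_mul //=.
case: (gd p2 == f); last by rewrite nmul0l.
by rewrite beta_id // ?one_le // -rp1; apply: (proj1 Bx (p1, p2)).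
Qed.

Lemma wel_inBe h : gr h = e -> inBe A e (wel A e h).
Proof.
move=> rh; split.
  by case=> p1 p2; rewrite belemE; case: eqP => [[-> _]|_]; [rewrite gre; apply: one_e | apply: E_0].
move=> g' h' outside; rewrite belemE; case: eqP => // [[ge hE]].
by move: outside; rewrite ge hE he gre rh !eqxx.
Qed.

Definition uelt g : BT G R := \sum_(h : G | gr h == e) belem (idE A (gr g)) g h.

Lemma uelt_inBe g : gd g = e -> gr g = e -> inBe A e (uelt g).
Proof.
move=> dg rg; split.
  case=> p1 p2; rewrite sum_belemE /=.
  by case: ifP => [/andP [/eqP -> _]|_]; [apply: one_in | apply: E_0].
move=> g' h' outside; rewrite sum_belemE /=; case: ifP => // /andP [/eqP gE /eqP rh].
by move: outside; rewrite gE dg rg rh !eqxx.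
Qed.

Lemma we_uelt : we A e = uelt e.
Proof. by rewrite /uelt gre. Qed.

Lemma we_inBe : inBe A e (we A e).
Proof. by rewrite we_uelt; apply: uelt_inBe; rewrite ?he ?gre. Qed.

Lemma uelt_mul g y : gd g = e -> gr g = e -> inBe A e y ->
  Bmul A (uelt g) y =
  [ffun p => if gr p.1 == e then beta A g (y (gmul (ginv g) p.1, p.2)) else 0].
Proof.
move=> dg rg By; apply/ffunP => [[p1 p2]]; rewrite ffunE Bmul_coef /=.
set m := gmul (ginv g) p1.
have only_g kg : (if [&& gd kg.2 == gd p2, gd kg.1 == gr (gmul kg.2 (ginv p2))
          & p1 == gmul kg.1 (gmul kg.2 (ginv p2))]
     then nmul (uelt g kg) (beta A kg.1 (y (gmul kg.2 (ginv p2), p2))) else 0) != 0 ->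
     [/\ kg = (g, gmul m p2), gr p1 = e & y (m, p2) != 0].
  case: kg => k g' /= /if_neq0 /andP [/and3P [/eqP dg' /eqP dk /eqP pE]].
  move=> /nmul_neq0 /andP [+ /beta_neq0 nzy]; rewrite sum_belemE /=.
  move=> /if_neq0 /andP [/andP [/eqP kE _] _]; move: dk pE; rewrite kE => dk pE.
  have mE : m = gmul g' (ginv p2) by rewrite /m pE gmulKV.
  by rewrite mE gmulVK // pE gr_mul.
case: (boolP ((gr p1 == e) && (y (m, p2) != 0))) => [/andP [/eqP rp1 nzy]|none].
  have [dm rm rp2] := Be_neq0 By nzy.
  rewrite (@sum_single _ _ _ (g, gmul m p2)) /=; last by move=> i /only_g [].
  rewrite rp1 eqxx gd_mul ?dm ?rp2 // eqxx gmulK ?dm ?rp2 // dg rm eqxx.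
  rewrite gmulKVl ?rp1 ?rg // eqxx /= sum_belemE /= eqxx gr_mul ?dm ?rp2 // rm eqxx /=.
  by apply/one_l/beta_in; rewrite dg -rm; apply: (proj1 By (m, p2)).
rewrite big1 => [|i _]; last first.
  by apply/eqP/negPn/negP => /only_g [_ rp1 nzy]; move: none; rewrite rp1 nzy eqxx.
by case: ifP => // rp1; move: none; rewrite rp1 /= negbK => /eqP ->; rewrite beta0.
Qed.

(* Conjugation by u_g moves w_{e,h} to w_{e,gh}, in two steps. *)
Lemma uelt_wel g h : gd g = e -> gr g = e -> gr h = e ->
  Bmul A (uelt g) (wel A e h) = belem (idE A e) g h.
Proof.
move=> dg rg rh; rewrite uelt_mul //; last exact: wel_inBe.
apply/ffunP => [[p1 p2]]; rewrite ffunE /wel !belemE /= !xpair_eqE.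
case: (eqVneq p1 g) => [->|ne].
  rewrite rg eqxx gmulVg dg eqxx /=.
  by case: (p2 == h); [rewrite -{1}dg beta_one rg | apply: beta0].
case: ifP => // /eqP rp1.
have -> : (gmul (ginv g) p1 == e) = false.
  apply/negbTE/eqP => E; move/eqP: ne; apply.
  by rewrite -(@gmulKVl _ g p1) ?rp1 ?rg // E -dg gmul_d.
exact: beta0.
Qed.

Lemma belem_uelt g h : gd g = e -> gr g = e -> gr h = e ->
  Bmul A (belem (idE A e) g h) (uelt (ginv g)) = wel A e (gmul g h).
Proof.
move=> dg rg rh; apply/ffunP => [[p1 p2]]; rewrite Bmul_belem /wel belemE sum_belemE /=.
case: (eqVneq (p1, p2) (e, gmul g h)) => [[-> ->]|ne].
  have dgh : gd (gmul g h) = gd h by rewrite gd_mul // dg rh.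
  have inv : gmul h (ginv (gmul g h)) = ginv g.
    apply: (@gmul_injr _ _ _ (gmul g h)); first by rewrite gd_mulV.
      by rewrite gd_inv gr_mul // dg rh.
    by rewrite gmulVK // gmulKV // dg rh.
  rewrite dgh eqxx inv gr_inv eqxx gmulV rg eqxx /= gr_mul ?dg ?rh // rg !eqxx /=.
  by rewrite -{2}dg beta_one rg one_le // one_e.
case: ifP => // /and3P [/eqP dh _ /eqP pE].
case: ifP => [/andP [/eqP mE /eqP rp2]|_]; last by rewrite beta0 nmul0r.
exfalso; move/eqP: ne; apply.
by rewrite pE mE gmulV rg -(gmulVK dh) mE gmulKVl // rp2 rg.
Qed.

Lemma uelt_rinv_unique g u' : gd g = e -> gr g = e -> inBe A e u' ->
  Bmul A (uelt g) u' = we A e -> u' = uelt (ginv g).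
Proof.
move=> dg rg Bu inv_u; apply/ffunP => [[m p2]]; rewrite sum_belemE /= gr_inv dg.
case: (boolP [&& gd m == e, gr m == e & gr p2 == e]) => [/and3P [/eqP dm /eqP rm /eqP rp2]|outside]; last first.
  rewrite (proj2 Bu _ _ outside); case: ifP => // /andP [/eqP mE /eqP rp2].
  by move: outside; rewrite mE gd_inv gr_inv rg dg rp2 !eqxx.
have := congr1 (fun z : BT G R => z (gmul g m, p2)) inv_u.
rewrite uelt_mul // ffunE /= gr_mul ?rg ?dg ?rm // eqxx gmulKV ?dg ?rm //.
rewrite /we /wel sum_belemE /= rp2 !eqxx andbT.
have Eu : u' (m, p2) \in Eid A (gd g) by rewrite dg -rm; apply: (proj1 Bu (m, p2)).
case: (eqVneq m (ginv g)) => [mE|ne].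
  move: Eu; rewrite mE gmulV rg eqxx => Eu beta_u.
  apply: (@beta_inj _ _ _ A g); [exact: Eu | rewrite dg; exact: one_e |].
  by rewrite beta_u -{2}dg beta_one rg.
have -> : (gmul g m == e) = false.
  apply/negbTE/eqP => gm_e; move/eqP: ne; apply; apply: (@gmul_injl _ g).
  - by rewrite dg rm.
  - by rewrite gr_inv.
  by rewrite gm_e gmulV rg.
move=> beta_u; apply: (@beta_inj _ _ _ A g); [exact: Eu | exact: E_0d | by rewrite beta_u beta0].
Qed.

Lemma uelt_mulV g : gd g = e -> gr g = e -> Bmul A (uelt g) (uelt (ginv g)) = we A e.
Proof.
move=> dg rg; rewrite uelt_mul //; last by apply: uelt_inBe; rewrite ?gd_inv ?gr_inv.
have ginv_e : gmul (ginv g) e = ginv g by rewrite -rg -gd_inv gmul_d.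
apply/ffunP => [[p1 p2]]; rewrite ffunE /we /wel !sum_belemE /= gr_inv dg.
case: (eqVneq p1 e) => [->|ne].
  rewrite gre eqxx ginv_e eqxx /=; case: (gr p2 == e); last exact: beta0.
  by rewrite -{1}dg beta_one rg.
case: ifP => //= /eqP rp1.
have -> : (gmul (ginv g) p1 == ginv g) = false.
  apply/negbTE/eqP => E; move/eqP: ne; apply; apply: (@gmul_injl _ (ginv g) p1 e).
  - by rewrite gd_inv rg rp1.
  - by rewrite gd_inv rg gre.
  by rewrite E ginv_e.
exact: beta0.
Qed.

(* The U_e-orbit of w_{e,h} is { w_{e,l} : l in T_e cap S_{d(h)} }: conjugating
   by u_g sends w_{e,h} to w_{e,gh}, and l h^-1 lies in G_e for every such l. *)
Lemma orbit_wel h : gr h = e -> forall x, Uorbit A e (wel A e h) x <-> Oset A e (gd h) x.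
Proof.
move=> rh x; split.
  case=> u [u' [[g [dg rg ->]] Bu' inv_u _ ->]].
  rewrite -/(uelt g) in inv_u *; rewrite (uelt_rinv_unique dg rg Bu' inv_u).
  rewrite uelt_wel // belem_uelt //; exists (gmul g h); split => //.
    by rewrite gr_mul // dg rh.
  by rewrite gd_mul // dg rh.
case=> l [rl dl ->].
have dg : gd (gmul l (ginv h)) = e by rewrite gd_mulV.
have rg : gr (gmul l (ginv h)) = e by rewrite gr_mulV.
exists (uelt (gmul l (ginv h))), (uelt (ginv (gmul l (ginv h)))); split.
- by exists (gmul l (ginv h)).
- by apply: uelt_inBe; rewrite ?gd_inv ?gr_inv.
- exact: uelt_mulV.
- by have := @uelt_mulV (ginv (gmul l (ginv h))); rewrite ginvK; apply; rewrite ?gd_inv ?gr_inv.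
by rewrite uelt_wel // belem_uelt // gmulVK.
Qed.


Lemma Worbit_Oset w : inW A e w ->
  exists2 f, f \in Fe e & forall x, Uorbit A e w x <-> Oset A e f x.
Proof. by move=> [h [rh ->]]; exists (gd h); [apply: Fe_dl | apply: orbit_wel]. Qed.

Lemma Oset_Worbit f : f \in Fe e ->
  exists2 w, inW A e w & forall x, Uorbit A e w x <-> Oset A e f x.
Proof. by move=> /Fe_ex [l [rl <-]]; exists (wel A e l); [exists l | apply: orbit_wel]. Qed.

(* If E_e <> 0 the w_{e,l} are pairwise distinct, hence so are the orbits. *)
Lemma wel_inj : idE A e != 0 -> injective (wel A e).
Proof.
move=> nz l l' /(congr1 (fun z : BT G R => z (e, l))).
rewrite /wel !belemE eqxx xpair_eqE eqxx /=.
by case: (eqVneq l l') => // _ /eqP; rewrite (negbTE nz).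
Qed.

Lemma Oset_neq : idE A e != 0 -> forall f f', f \in Fe e -> f' \in Fe e -> f != f' ->
  ~ (forall x, Oset A e f x <-> Oset A e f' x).
Proof.
move=> nz f f' /Fe_ex [l [rl dl]] _ ne same.
have [l' [_ dl' /(wel_inj nz) ll']] : Oset A e f' (wel A e l) by apply/same; exists l.
by move: ne; rewrite -dl -dl' ll' eqxx.
Qed.

(* omega_{e,f} is the sum of the (distinct) elements of its orbit; when
   E_e = 0 all the w_{e,l} collapse to 0. *)
Lemma omega_orbit_sum f : f \in Fe e -> exists s : seq (BT G R),
  [/\ uniq s, (forall x, x \in s <-> Oset A e f x) & omega A e f = \sum_(x <- s) x].
Proof.
move=> Ff; case: (eqVneq (idE A e) 0) => [one0|nz].
  have wel0 l : wel A e l = 0 by apply/ffunP => p; rewrite /wel belemE one0 if_same ffunE.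
  exists [:: 0]; split => // [x|].
    rewrite inE; split => [/eqP ->|[l [_ _ ->]]]; last by rewrite wel0.
    by have [l [rl dl]] := Fe_ex Ff; exists l; rewrite wel0.
  by rewrite big_seq1; apply/ffunP => p; rewrite omega_coef one0 if_same ffunE.
exists (map (wel A e) (enum [pred l | (gr l == e) && (gd l == f)])); split.
- by rewrite map_inj_uniq ?enum_uniq //; apply: wel_inj.
- move=> x; split => [/mapP [l]|[l [rl dl ->]]]; last by apply: map_f; rewrite mem_enum inE rl dl !eqxx.
  by rewrite mem_enum inE => /andP [/eqP rl /eqP dl] ->; exists l.
by rewrite /omega big_map big_enum /=; apply: eq_bigl => l; rewrite inE.
Qed.

Lemma we_sum_omega : we A e = \sum_(f | f \in Fe e) omega A e f.
Proof. by rewrite -{1}(sum_cut we_inBe); apply: eq_bigr => f _; rewrite omega_cut. Qed.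

Lemma omega_idem f : Bmul A (omega A e f) (omega A e f) = omega A e f.
Proof.
rewrite mul_omega; last exact: omega_inBe.
by rewrite (cut_supported _ (omega_supported (f := f))) eqxx.
Qed.

Lemma omega_central f x : inBe A e x -> Bmul A x (omega A e f) = Bmul A (omega A e f) x.
Proof. by move=> Bx; rewrite mul_omega // omega_mul. Qed.

Lemma omega_orth f f' : f != f' -> Bmul A (omega A e f) (omega A e f') = 0.
Proof.
move=> ne; rewrite mul_omega; last exact: omega_inBe.
by rewrite (cut_supported _ (omega_supported (f := f))) (negbTE ne).
Qed.

Lemma Bef_char f x : Bef A e f x <-> inB A x /\ supported f x.
Proof.
split.
  case=> y By ->; rewrite mul_omega //; split.
    by move=> p; rewrite ffunE; case: ifP => _; [apply: (proj1 By) | apply: E_0].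
  move=> g h outside; rewrite ffunE /=; case: (eqVneq (gd h) f) => [dh|//].
  by apply: (proj2 By); apply: contra outside => /and3P [-> -> ->]; rewrite dh eqxx.
case=> Bx sx; have Bex := supported_inBe Bx sx.
by exists x => //; rewrite mul_omega // (cut_supported _ sx) eqxx.
Qed.

Lemma Bef0 f : Bef A e f 0.
Proof. by apply/Bef_char; split => [p|g h _]; rewrite ffunE //; apply: E_0. Qed.

Lemma Bef_sub f x y : Bef A e f x -> Bef A e f y -> Bef A e f (x - y).
Proof.
move=> /Bef_char [Bx sx] /Bef_char [By sy]; apply/Bef_char.
split => [p|g h outside]; rewrite !ffunE; first by apply: E_sub; [apply: Bx | apply: By].
by rewrite sx ?sy // subr0.
Qed.

Lemma Bef_scale f (a : K) x : Bef A e f x -> Bef A e f (a *: x).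
Proof.
move=> /Bef_char [Bx sx]; apply/Bef_char.
by split => [p|g h outside]; rewrite ffunE; [apply: E_scale (Bx p) | rewrite sx // scaler0].
Qed.

(* B_{e,f} is a two-sided ideal of B_e: by Bmul_neq0, a product of x with an
   element of B_e (on either side) is supported where x is. *)
Lemma supported_mull f a x : inBe A e a -> supported f x -> supported f (Bmul A a x).
Proof.
move=> Ba sx p1 p2 outside; apply/eqP/negPn/negP => /Bmul_neq0 [k [g /= [nza nzx dg dk pE]]].
have [dk' rk _] := Be_neq0 Ba nza.
have [dm rm rp2 dp2] := supported_neq0 sx nzx.
by move: outside; rewrite pE gd_mul // gr_mul // dm rk rp2 dp2 !eqxx.
Qed.

Lemma supported_mulr f a x : supported f x -> inBe A e a -> supported f (Bmul A x a).
Proof.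
move=> sx Ba p1 p2 outside; apply/eqP/negPn/negP => /Bmul_neq0 [k [g /= [nzx nza dg dk pE]]].
have [dk' rk _ dgf] := supported_neq0 sx nzx.
have [dm rm rp2] := Be_neq0 Ba nza.
by move: outside; rewrite pE gd_mul // gr_mul // dm rk rp2 -dg dgf !eqxx.
Qed.

Lemma Bef_mul f a x : inBe A e a -> Bef A e f x ->
  Bef A e f (Bmul A a x) /\ Bef A e f (Bmul A x a).
Proof.
move=> Ba /Bef_char [Bx sx]; split; apply/Bef_char; split.
- exact: inB_mul (proj1 Ba).
- exact: supported_mull.
- exact: inB_mul.
- exact: supported_mulr.
Qed.

Lemma Bef_omega f : Bef A e f (omega A e f).
Proof. by apply/Bef_char; split; [apply: (proj1 (omega_inBe f)) | apply: omega_supported]. Qed.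

Lemma omega_unit f x : Bef A e f x ->
  Bmul A (omega A e f) x = x /\ Bmul A x (omega A e f) = x.
Proof.
move=> /Bef_char [Bx sx]; have Bex := supported_inBe Bx sx.
by rewrite omega_mul // mul_omega // (cut_supported _ sx) eqxx.
Qed.

Lemma cut_sum_Bef f (y : G -> BT G R) :
  (forall f', f' \in Fe e -> Bef A e f' (y f')) -> f \in Fe e ->
  cut f (\sum_(f' | f' \in Fe e) y f') = y f.
Proof.
move=> By Ff; rewrite cut_sum (bigD1 f) //= big1 => [|f' /andP [Ff' ne]].
  by have [_ sy] := (Bef_char f (y f)).1 (By f Ff); rewrite addr0 (cut_supported _ sy) eqxx.
by have [_ sy] := (Bef_char f' (y f')).1 (By f' Ff'); rewrite (cut_supported _ sy) (negbTE ne).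
Qed.

Lemma Bef_decompose x : inBe A e x -> exists y : G -> BT G R,
  (forall f, f \in Fe e -> Bef A e f (y f)) /\ x = \sum_(f | f \in Fe e) y f.
Proof.
move=> Bx; exists (cut^~ x); split; last by rewrite sum_cut.
by move=> f _; exists x => //; rewrite mul_omega.
Qed.

Lemma Bef_decompose_unique (y y' : G -> BT G R) :
  (forall f, f \in Fe e -> Bef A e f (y f) /\ Bef A e f (y' f)) ->
  \sum_(f | f \in Fe e) y f = \sum_(f | f \in Fe e) y' f ->
  forall f, f \in Fe e -> y f = y' f.
Proof.
move=> By eq_sum f Ff.
rewrite -(@cut_sum_Bef f y (fun f' Ff' => (By f' Ff').1)) // eq_sum.
by apply: cut_sum_Bef => // f' Ff'; case: (By f' Ff').
Qed.

End FixedIdentity.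

Theorem lemma3p4 (K : comPzRingType) (G : groupoid) (R : nuAlg K)
    (A : gaction G R) (e : G) (he : gd e = e) :
  [/\
   (* (i) *)
   [/\ (forall w : BT G R, inW A e w ->
          exists2 f : G, f \in Fe e & forall x, Uorbit A e w x <-> Oset A e f x),
       (forall f : G, f \in Fe e ->
          exists2 w : BT G R, inW A e w & forall x, Uorbit A e w x <-> Oset A e f x),
       (idE A e != 0 -> forall f f' : G, f \in Fe e -> f' \in Fe e -> f != f' ->
          ~ (forall x, Oset A e f x <-> Oset A e f' x))
     & (forall f : G, f \in Fe e ->
          exists s : seq (BT G R), [/\ uniq s, (forall x, x \in s <-> Oset A e f x)
                                   & omega A e f = \sum_(x <- s) x])],
   (* (ii) *)
   we A e = \sum_(f : G | f \in Fe e) omega A e f,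
   (* (iii) *)
   (forall f : G, f \in Fe e ->
      [/\ inBe A e (omega A e f),
          Bmul A (omega A e f) (omega A e f) = omega A e f
        & forall x, inBe A e x -> Bmul A x (omega A e f) = Bmul A (omega A e f) x])
   /\ (forall f f' : G, f \in Fe e -> f' \in Fe e -> f != f' ->
         Bmul A (omega A e f) (omega A e f') = 0),
   (* (iv) *)
   (forall f : G, f \in Fe e ->
      [/\ forall x, Bef A e f x <->
            (inB A x /\ forall g h : G,
               ~~ [&& gd g == e, gr g == e, gr h == e & gd h == f] -> x (g, h) = 0),
          (* ideal of B_e *)
          Bef A e f 0 /\ (forall x y, Bef A e f x -> Bef A e f y -> Bef A e f (x - y)),
          (forall (a : K) x, Bef A e f x -> Bef A e f (a *: x)),
          (forall a x, inBe A e a -> Bef A e f x ->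
             Bef A e f (Bmul A a x) /\ Bef A e f (Bmul A x a))
        & (* unital with identity omega_{e,f} *)
          Bef A e f (omega A e f) /\
          (forall x, Bef A e f x ->
             Bmul A (omega A e f) x = x /\ Bmul A x (omega A e f) = x)])
 & (* (v) *)
   (forall x, inBe A e x ->
      exists y : G -> BT G R, (forall f, f \in Fe e -> Bef A e f (y f)) /\
                            x = \sum_(f : G | f \in Fe e) y f)
   /\ (forall y y' : G -> BT G R,
         (forall f, f \in Fe e -> Bef A e f (y f) /\ Bef A e f (y' f)) ->
         \sum_(f : G | f \in Fe e) y f = \sum_(f : G | f \in Fe e) y' f ->
         forall f, f \in Fe e -> y f = y' f)].
Proof.
split.
- split=> [w|f|nz f f'|f]; [exact: Worbit_Oset | exact: Oset_Worbit | exact: Oset_neq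
                             | exact: omega_orbit_sum].
- exact: we_sum_omega.
- split=> [f _|f f' _ _]; last exact: omega_orth.
  by split=> [||x]; [apply: omega_inBe | apply: omega_idem | apply: omega_central].
- move=> f _; split=> [x||||].
  + exact: Bef_char.
  + by split=> [|x y]; [apply: Bef0 | apply: Bef_sub].
  + by move=> a x; apply: Bef_scale.
  + by move=> a x; apply: Bef_mul.
  + by split=> [|x]; [apply: Bef_omega | apply: omega_unit].
- by split=> [x|y y']; [apply: Bef_decompose | apply: Bef_decompose_unique].
Qed.
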